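(* Let $(\lambda_k)_{k=-\infty}^\infty$ be a strictly increasing sequence of real numbers and $\delta_k:=\min\{\lambda_k-\lambda_{k-1},\lambda_{k+1}-\lambda_k\}$. Then for every positive integer $N$ and all nonnegative real numbers $t_1,\dots,t_N$, $$\sum_{m=1}^N\sum_{\substack{n=1\\ n\ne m}}^N\frac{\delta_m\delta_nt_mt_n}{(\lambda_m-\lambda_n)^2}\le\frac{\pi^2}{3}\sum_{n=1}^N t_n^2.$$ *)

From Stdlib Require Export Reals ZArith.
Open Scope R_scope.

Definition strictly_increasing_Z (lam : Z -> R) : Prop :=
  forall j k : Z, (j < k)%Z -> lam j < lam k.

Definition delta (lam : Z -> R) (k : Z) : R :=
  Rmin (lam k - lam (k - 1)%Z) (lam (k + 1)%Z - lam k).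

Fixpoint sum1 (N : nat) (f : nat -> R) : R :=
  match N with
  | O => 0
  | S n => sum1 n f + f (S n)
  end.

(* Since t_m t_n <= (t_m^2 + t_n^2) / 2 and the kernel is symmetric and nonnegative, it
   suffices (Schur's test) to bound every row sum by pi^2/3; by the reflection
   k |-> -lam (2m - k) it is enough to bound the part n > m by pi^2/6.  After scaling
   delta_m to 1, the weights e_i = delta_(m+i) have partial sums E_i with
   lam_(m+i) - lam_m >= max (E_i, E_(i-1) + 1).  Let F be the concave piecewise-linear
   function with F k = sum_(j<=k) 1/j^2; by convexity of 1/x^2 each term e_i/x_i^2 is at
   most the increment of F over [E_(i-1), E_i], so the row sum is at most sup F = zeta(2).
   Finally sum_(j<=K) 1/j^2 <= pi^2/6 follows from
   sum_(k=1..M) csc^2 ((2k-1) pi / (4M)) = 2 M^2 for M a power of two and sin x < x. *)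

From Stdlib Require Import Reals ZArith Lra Lia Psatz.
Open Scope R_scope.

Lemma sum1_ext N f g : (forall i, (1 <= i <= N)%nat -> f i = g i) -> sum1 N f = sum1 N g.
Proof.
  induction N as [|N IH]; intros H; simpl; [reflexivity|].
  rewrite IH by (intros; apply H; lia). rewrite H by lia. reflexivity.
Qed.

Lemma sum1_le N f g : (forall i, (1 <= i <= N)%nat -> f i <= g i) -> sum1 N f <= sum1 N g.
Proof.
  induction N as [|N IH]; intros H; simpl; [lra|].
  apply Rplus_le_compat; [apply IH; intros; apply H | apply H]; lia.
Qed.

Lemma sum1_add N f g : sum1 N (fun i => f i + g i) = sum1 N f + sum1 N g.
Proof. induction N as [|N IH]; simpl; [lra|]. rewrite IH; ring. Qed.

Lemma sum1_scal N c f : sum1 N (fun i => c * f i) = c * sum1 N f.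
Proof. induction N as [|N IH]; simpl; [ring|]. rewrite IH; ring. Qed.

Lemma sum1_nonneg N f : (forall i, (1 <= i <= N)%nat -> 0 <= f i) -> 0 <= sum1 N f.
Proof.
  induction N as [|N IH]; intros H; simpl; [lra|].
  apply Rplus_le_le_0_compat; [apply IH; intros; apply H | apply H]; lia.
Qed.

Lemma sum1_exchange N M (g : nat -> nat -> R) :
  sum1 N (fun m => sum1 M (fun n => g m n)) = sum1 M (fun n => sum1 N (fun m => g m n)).
Proof.
  induction N as [|N IH]; simpl.
  - induction M as [|M IHM]; simpl; [reflexivity|]. rewrite <- IHM; ring.
  - rewrite IH, <- sum1_add. reflexivity.
Qed.

Lemma sum1_add_range a b f : sum1 (a + b) f = sum1 a f + sum1 b (fun i => f (a + i)%nat).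
Proof.
  induction b as [|b IH]; simpl.
  - rewrite Nat.add_0_r; ring.
  - rewrite Nat.add_succ_r; simpl. rewrite IH; ring.
Qed.

Lemma sum1_Sl n f : sum1 (S n) f = f 1%nat + sum1 n (fun i => f (S i)).
Proof. induction n as [|n IH]; simpl in *; [ring|]. rewrite IH; ring. Qed.

Lemma sum1_rev n f : sum1 n f = sum1 n (fun i => f (S n - i)%nat).
Proof.
  induction n as [|n IH]; [reflexivity|].
  rewrite (sum1_Sl n (fun i => f (S (S n) - i)%nat)). simpl sum1 at 1.
  rewrite IH, Nat.sub_succ, Nat.sub_0_r, Rplus_comm. reflexivity.
Qed.

Lemma sum1_even_odd M g :
  sum1 (2 * M) g = sum1 M (fun k => g (2 * k - 1)%nat) + sum1 M (fun k => g (2 * k)%nat).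
Proof.
  induction M as [|M IH]; [simpl; ring|].
  replace (2 * S M)%nat with (S (S (2 * M))) by lia. cbn [sum1]. rewrite IH.
  replace (2 * S M - 1)%nat with (S (2 * M)) by lia.
  replace (2 * S M)%nat with (S (S (2 * M))) by lia. ring.
Qed.

Lemma sum1_le_range N M f : (N <= M)%nat -> (forall i, 0 <= f i) -> sum1 N f <= sum1 M f.
Proof.
  intros HNM Hf. replace M with (N + (M - N))%nat by lia. rewrite sum1_add_range.
  assert (0 <= sum1 (M - N) (fun i => f (N + i)%nat)) by (apply sum1_nonneg; auto). lra.
Qed.

Lemma INR_ge_1 k : (1 <= k)%nat -> 1 <= INR k.
Proof. intros; apply (le_INR 1); assumption. Qed.

Definition csc2 (x : R) : R := / sin x ^ 2.

Lemma csc2_half x : 0 < x < PI -> csc2 x = / 4 * (csc2 (x / 2) + csc2 (PI / 2 - x / 2)).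
Proof.
  intros [Hx0 HxPI]. unfold csc2. rewrite sin_shift.
  replace x with (2 * (x / 2)) at 1 by field. rewrite sin_2a.
  assert (Hs : 0 < sin (x / 2)) by (apply sin_gt_0; lra).
  assert (Hc : 0 < cos (x / 2)) by (apply cos_gt_0; lra).
  assert (Hsc := sin2_cos2 (x / 2)). unfold Rsqr in Hsc.
  field_simplify; try lra. rewrite <- Hsc at 1. field. lra.
Qed.

Definition csc2_sum (M : nat) : R :=
  sum1 M (fun k => csc2 ((2 * INR k - 1) * PI / (4 * INR M))).

Lemma csc2_sum_double M : (1 <= M)%nat -> csc2_sum (2 * M) = 4 * csc2_sum M.
Proof.
  intros HM. unfold csc2_sum.
  assert (HMr := INR_ge_1 M HM). assert (HPI := PI_RGT_0).
  replace (2 * M)%nat with (M + M)%nat by lia. rewrite sum1_add_range, plus_INR.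
  set (y k := (2 * INR k - 1) * PI / (4 * (INR M + INR M))).
  rewrite (sum1_ext M (fun k => csc2 ((2 * INR k - 1) * PI / (4 * INR M)))
    (fun k => / 4 * (csc2 (y k) + csc2 (PI / 2 - y k)))).
  2:{ intros k Hk. assert (1 <= INR k <= INR M) by (split; [apply INR_ge_1|apply le_INR]; lia).
      assert (Ey : (2 * INR k - 1) * PI / (4 * INR M) / 2 = y k) by (unfold y; field; lra).
      rewrite csc2_half, Ey; [reflexivity|].
      split; [apply Rdiv_lt_0_compat; nra|].
      apply Rmult_lt_reg_r with (4 * INR M); [lra|]. field_simplify; nra. }
  rewrite sum1_scal, sum1_add, (sum1_rev M (fun k => csc2 (PI / 2 - y k))).
  rewrite (sum1_ext M (fun i => csc2 (PI / 2 - y (S M - i)%nat)) (fun i => csc2 (y (M + i)%nat))).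
  - unfold y. field.
  - intros i Hi. unfold y. f_equal. rewrite minus_INR by lia. rewrite plus_INR, S_INR. field. lra.
Qed.

Lemma csc2_sum_pow2 n : csc2_sum (2 ^ n) = 2 * 4 ^ n.
Proof.
  induction n as [|n IH].
  - unfold csc2_sum, csc2; simpl.
    replace ((2 * 1 - 1) * PI / (4 * 1)) with (PI / 4) by field.
    rewrite sin_PI4. assert (Hs2 := sqrt_sqrt 2 ltac:(lra)).
    assert (0 < sqrt 2) by (apply sqrt_lt_R0; lra). field_simplify; [simpl; rewrite Rmult_1_r, Hs2|]; lra.
  - rewrite Nat.pow_succ_r', csc2_sum_double, IH; [simpl; ring|].
    pose proof (Nat.pow_gt_lin_r 2 n). lia.
Qed.

Lemma inv_sqr_le_csc2 x : 0 < x < PI -> / x ^ 2 <= csc2 x.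
Proof.
  intros [Hx0 HxPI]. assert (Hs := sin_gt_0 x Hx0 HxPI). assert (Hl := sin_lt_x x Hx0).
  apply Rinv_le_contravar; [nra|]. apply pow_incr; lra.
Qed.

Definition inv_sqr_sum (K : nat) : R := sum1 K (fun j => / INR j ^ 2).
Definition odd_inv_sqr_sum (M : nat) : R := sum1 M (fun k => / (2 * INR k - 1) ^ 2).

Lemma odd_inv_sqr_sum_le_csc2_sum M :
  (1 <= M)%nat -> 16 * INR M ^ 2 / PI ^ 2 * odd_inv_sqr_sum M <= csc2_sum M.
Proof.
  intros HM. unfold odd_inv_sqr_sum, csc2_sum. rewrite <- sum1_scal. apply sum1_le. intros k Hk.
  assert (HMr := INR_ge_1 M HM).
  assert (1 <= INR k <= INR M) by (split; [apply INR_ge_1|apply le_INR]; lia).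
  assert (HPI := PI_RGT_0).
  replace (16 * INR M ^ 2 / PI ^ 2 * / (2 * INR k - 1) ^ 2)
    with (/ ((2 * INR k - 1) * PI / (4 * INR M)) ^ 2) by (field; split; nra).
  apply inv_sqr_le_csc2. split; [apply Rdiv_lt_0_compat; nra|].
  apply Rmult_lt_reg_r with (4 * INR M); [lra|]. field_simplify; nra.
Qed.

Lemma odd_inv_sqr_sum_pow2_le n : odd_inv_sqr_sum (2 ^ n) <= PI ^ 2 / 8.
Proof.
  assert (Hn : (1 <= 2 ^ n)%nat) by (pose proof (Nat.pow_gt_lin_r 2 n); lia).
  assert (H := odd_inv_sqr_sum_le_csc2_sum _ Hn).
  rewrite csc2_sum_pow2, pow_INR in H. replace (INR 2) with 2 in H by (simpl; ring).
  replace (4 ^ n) with ((2 ^ n) ^ 2) in H by (rewrite <- pow_mult, Nat.mul_comm, pow_mult; f_equal; ring).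
  assert (HPI := PI_RGT_0). assert (0 < 2 ^ n) by (apply pow_lt; lra).
  set (q := 2 ^ n) in *. set (o := odd_inv_sqr_sum _) in *.
  apply Rmult_le_reg_l with (16 * q ^ 2 / PI ^ 2); [apply Rdiv_lt_0_compat; nra|].
  replace (16 * q ^ 2 / PI ^ 2 * (PI ^ 2 / 8)) with (2 * q ^ 2) by (field; apply PI_neq0). lra.
Qed.

Lemma inv_sqr_nonneg j : 0 <= / INR j ^ 2.
Proof.
  destruct j as [|j]; [simpl; rewrite Rmult_0_l, Rinv_0; lra|].
  apply Rlt_le, Rinv_0_lt_compat, pow_lt, lt_0_INR; lia.
Qed.

Lemma inv_sqr_sum_double M : inv_sqr_sum (2 * M) = odd_inv_sqr_sum M + / 4 * inv_sqr_sum M.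
Proof.
  unfold inv_sqr_sum, odd_inv_sqr_sum. rewrite sum1_even_odd, <- sum1_scal. f_equal.
  - apply sum1_ext; intros k Hk. rewrite minus_INR, mult_INR by lia. reflexivity.
  - apply sum1_ext; intros k Hk. rewrite mult_INR.
    assert (0 < INR k) by (apply lt_0_INR; lia). simpl INR. field. lra.
Qed.

(* With S := inv_sqr_sum (2 * 2 ^ K), splitting off the odd terms gives S <= PI^2/8 + S/4. *)
Lemma inv_sqr_sum_le K : inv_sqr_sum K <= PI ^ 2 / 6.
Proof.
  assert (HK : (K <= 2 * 2 ^ K)%nat) by (pose proof (Nat.pow_gt_lin_r 2 K); lia).
  assert (H1 : inv_sqr_sum K <= inv_sqr_sum (2 * 2 ^ K))
    by (apply sum1_le_range; [exact HK | apply inv_sqr_nonneg]).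
  assert (H2 : inv_sqr_sum (2 ^ K) <= inv_sqr_sum (2 * 2 ^ K))
    by (apply sum1_le_range; [lia | apply inv_sqr_nonneg]).
  assert (E := inv_sqr_sum_double (2 ^ K)). assert (Ho := odd_inv_sqr_sum_pow2_le K). lra.
Qed.

Lemma inv_sqr_le_contravar u v : 0 < u -> u <= v -> / v ^ 2 <= / u ^ 2.
Proof. intros Hu Huv. apply Rinv_le_contravar; [apply pow_lt; lra | apply pow_incr; lra]. Qed.

Lemma inv_sqr_tangent y c : 0 < y -> 0 < c -> / c ^ 2 - 2 * (y - c) / c ^ 3 <= / y ^ 2.
Proof.
  intros Hy Hc.
  assert (E : / y ^ 2 - (/ c ^ 2 - 2 * (y - c) / c ^ 3) = (y - c) ^ 2 * (2 * y + c) / (y ^ 2 * c ^ 3))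
    by (field; lra).
  assert (0 <= (y - c) ^ 2 * (2 * y + c) / (y ^ 2 * c ^ 3)).
  { apply Rmult_le_pos; [apply Rmult_le_pos; [apply pow2_ge_0 | lra] |].
    apply Rlt_le, Rinv_0_lt_compat, Rmult_lt_0_compat; apply pow_lt; lra. }
  lra.
Qed.

Lemma inv_sqr_convex p u v : 0 < u -> 0 < v -> 0 <= p <= 1 ->
  / (p * u + (1 - p) * v) ^ 2 <= p / u ^ 2 + (1 - p) / v ^ 2.
Proof.
  intros Hu Hv Hp. set (c := p * u + (1 - p) * v).
  assert (Hc : 0 < c) by (unfold c; nra).
  assert (Hu' := Rmult_le_compat_l p _ _ (proj1 Hp) (inv_sqr_tangent u c Hu Hc)).
  assert (Hv' := Rmult_le_compat_l (1 - p) _ _ ltac:(lra) (inv_sqr_tangent v c Hv Hc)).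
  assert (Hbary : p * (u - c) + (1 - p) * (v - c) = 0) by (unfold c; ring).
  assert (E : p * (/ c ^ 2 - 2 * (u - c) / c ^ 3) + (1 - p) * (/ c ^ 2 - 2 * (v - c) / c ^ 3)
              = / c ^ 2 - 2 * (p * (u - c) + (1 - p) * (v - c)) / c ^ 3) by (field; lra).
  rewrite Hbary, Rmult_0_r, Rdiv_0_l, Rminus_0_r in E.
  unfold Rdiv at 1 2. lra.
Qed.

(* The increment of F over [a, a + e] when a = A - p lies just below the node A. *)
Lemma inv_sqr_crossing A p e : 0 < A -> 0 <= p <= 1 -> 0 <= e <= 1 ->
  e / (A + 1 - p) ^ 2 <= p / A ^ 2 + (e - p) / (A + 1) ^ 2.
Proof.
  intros HA Hp He.
  assert (Hcvx := inv_sqr_convex p A (A + 1) HA ltac:(lra) Hp).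
  replace (p * A + (1 - p) * (A + 1)) with (A + 1 - p) in Hcvx by ring.
  assert (Hmono := inv_sqr_le_contravar A (A + 1) HA ltac:(lra)).
  assert (Hscaled := Rmult_le_compat_l e _ _ (proj1 He) Hcvx).
  assert (0 <= p * (1 - e) * (/ A ^ 2 - / (A + 1) ^ 2))
    by (apply Rmult_le_pos; [apply Rmult_le_pos|]; lra).
  unfold Rdiv in *. nra.
Qed.

Lemma inv_sqr_split_unit a e y : 0 <= a -> 1 <= e -> a + e <= y ->
  e / y ^ 2 <= / (a + 1) ^ 2 + (e - 1) / Rmax (a + 2) (a + e) ^ 2.
Proof.
  intros Ha He Hy.
  assert (Hy' : e / y ^ 2 <= e / (a + e) ^ 2).
  { apply Rmult_le_compat_l; [lra | apply inv_sqr_le_contravar; lra]. }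
  assert (H12 := inv_sqr_le_contravar (a + 1) (a + 2) ltac:(lra) ltac:(lra)).
  destruct (Rle_or_lt e 2) as [He2 | He2].
  - rewrite Rmax_left by lra.
    assert (Hcvx := inv_sqr_convex (2 - e) (a + 1) (a + 2) ltac:(lra) ltac:(lra) ltac:(lra)).
    replace ((2 - e) * (a + 1) + (1 - (2 - e)) * (a + 2)) with (a + e) in Hcvx by ring.
    assert (Hscaled := Rmult_le_compat_l e _ _ ltac:(lra) Hcvx).
    assert (0 <= (e - 1) ^ 2 * (/ (a + 1) ^ 2 - / (a + 2) ^ 2))
      by (apply Rmult_le_pos; [apply pow2_ge_0 | lra]).
    unfold Rdiv in *. nra.
  - rewrite Rmax_right by lra.
    assert (H1e := inv_sqr_le_contravar (a + 1) (a + e) ltac:(lra) ltac:(lra)).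
    replace (e / (a + e) ^ 2) with (/ (a + e) ^ 2 + (e - 1) / (a + e) ^ 2) in Hy' by (field; lra).
    lra.
Qed.

(* [chord k] extends the k-th piece of F; as F is the pointwise minimum of the chords,
   [under_chords z s] means s <= F z. *)
Definition chord (k : nat) (z : R) : R := inv_sqr_sum k + (z - INR k) / (INR k + 1) ^ 2.

Definition under_chords (z s : R) : Prop := forall k : nat, s <= chord k z.

Lemma chord_le_succ k z : z <= INR k + 1 -> chord k z <= chord (S k) z.
Proof.
  intros Hz. unfold chord. change (inv_sqr_sum (S k)) with (inv_sqr_sum k + / INR (S k) ^ 2).
  rewrite S_INR. assert (Hk := pos_INR k).
  assert (Hmono := inv_sqr_le_contravar (INR k + 1) (INR k + 1 + 1) ltac:(lra) ltac:(lra)).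
  assert (E : inv_sqr_sum k + / (INR k + 1) ^ 2 + (z - (INR k + 1)) / (INR k + 1 + 1) ^ 2
              - (inv_sqr_sum k + (z - INR k) / (INR k + 1) ^ 2)
              = (INR k + 1 - z) * (/ (INR k + 1) ^ 2 - / (INR k + 1 + 1) ^ 2)) by (field; lra).
  assert (0 <= (INR k + 1 - z) * (/ (INR k + 1) ^ 2 - / (INR k + 1 + 1) ^ 2))
    by (apply Rmult_le_pos; lra).
  lra.
Qed.

Lemma chord_le j k z : (j <= k)%nat -> z <= INR j + 1 -> chord j z <= chord k z.
Proof.
  intros Hjk Hz. induction Hjk as [|k Hjk IH]; [lra|].
  apply Rle_trans with (chord k z); [exact IH|]. apply chord_le_succ.
  assert (INR j <= INR k) by (apply le_INR; exact Hjk). lra.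
Qed.

Lemma under_chords_le_l z s s' : s' <= s -> under_chords z s -> under_chords z s'.
Proof. intros Hs' Hs k. specialize (Hs k). lra. Qed.

Lemma under_chords_0 : under_chords 0 0.
Proof.
  intros k. apply Rle_trans with (chord 0 0); [unfold chord, inv_sqr_sum; simpl; lra|].
  apply chord_le; [lia | simpl; lra].
Qed.

Lemma under_chords_bound z s : under_chords z s -> s <= PI ^ 2 / 6.
Proof.
  intros Hs. destruct (INR_archimed 1 z ltac:(lra)) as [n Hn]. rewrite Rmult_1_r in Hn.
  specialize (Hs n). unfold chord in Hs.
  assert (0 < / (INR n + 1) ^ 2) by (apply Rinv_0_lt_compat, pow_lt; pose proof (pos_INR n); lra).
  assert (Hb := inv_sqr_sum_le n). unfold Rdiv in Hs. nra.
Qed.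

Lemma nat_floor_exists a : 0 <= a -> exists j : nat, INR j <= a < INR j + 1.
Proof.
  intros Ha. destruct (INR_archimed 1 a ltac:(lra)) as [n Hn]. rewrite Rmult_1_r in Hn.
  induction n as [|n IH]; [simpl in Hn; lra|].
  destruct (Rlt_or_le a (INR n)) as [Han | Han]; [exact (IH Han)|].
  exists n. rewrite S_INR in Hn. lra.
Qed.

Lemma under_chords_step_le1 a s e y : under_chords a s -> 0 <= a -> 0 < e <= 1 -> a + 1 <= y ->
  under_chords (a + e) (s + e / y ^ 2).
Proof.
  intros Hs Ha He Hy k. destruct (nat_floor_exists a Ha) as [j Hj].
  destruct (le_lt_dec k j) as [Hkj | Hjk].
  - assert (INR k <= INR j) by (apply le_INR; exact Hkj). assert (Hk := pos_INR k).
    assert (e / y ^ 2 <= e / (INR k + 1) ^ 2)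
      by (apply Rmult_le_compat_l; [lra | apply inv_sqr_le_contravar; lra]).
    specialize (Hs k). unfold chord in *.
    replace ((a + e - INR k) / (INR k + 1) ^ 2)
      with ((a - INR k) / (INR k + 1) ^ 2 + e / (INR k + 1) ^ 2) by (field; lra).
    lra.
  - apply Rle_trans with (chord (S j) (a + e)).
    2:{ apply chord_le; [lia | rewrite S_INR; lra]. }
    specialize (Hs j). assert (Hj0 := pos_INR j).
    assert (e / y ^ 2 <= e / (a + 1) ^ 2)
      by (apply Rmult_le_compat_l; [lra | apply inv_sqr_le_contravar; lra]).
    assert (Hc := inv_sqr_crossing (INR j + 1) (INR j + 1 - a) e ltac:(lra) ltac:(lra) ltac:(lra)).
    replace (INR j + 1 + 1 - (INR j + 1 - a)) with (a + 1) in Hc by ring.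
    unfold chord in *. change (inv_sqr_sum (S j)) with (inv_sqr_sum j + / INR (S j) ^ 2).
    rewrite S_INR.
    assert ((a - INR j) / (INR j + 1) ^ 2 + (INR j + 1 - a) / (INR j + 1) ^ 2 = / (INR j + 1) ^ 2)
      by (field; lra).
    replace (e - (INR j + 1 - a)) with (a + e - (INR j + 1)) in Hc by ring.
    lra.
Qed.

Lemma under_chords_step a s e y : under_chords a s -> 0 <= a -> 0 < e -> a + 1 <= y -> a + e <= y ->
  under_chords (a + e) (s + e / y ^ 2).
Proof.
  destruct (INR_archimed 1 e ltac:(lra)) as [n Hn]. rewrite Rmult_1_r in Hn.
  revert a s e y Hn. induction n as [|n IH]; intros a s e y Hn Hs Ha He Hy Hey; [simpl in Hn; lra|].
  destruct (Rle_or_lt e 1) as [He1 | He1]; [apply under_chords_step_le1; auto; lra|].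
  assert (Hs1 := under_chords_step_le1 a s 1 (a + 1) Hs Ha ltac:(lra) ltac:(lra)).
  assert (Hrest := IH (a + 1) _ (e - 1) (Rmax (a + 2) (a + e)) ltac:(rewrite S_INR in Hn; lra)
                     Hs1 ltac:(lra) ltac:(lra) ltac:(pose proof (Rmax_l (a + 2) (a + e)); lra)
                     ltac:(pose proof (Rmax_r (a + 2) (a + e)); lra)).
  replace (a + 1 + (e - 1)) with (a + e) in Hrest by ring.
  apply (under_chords_le_l _ _ _ (Rplus_le_compat_l s _ _ (inv_sqr_split_unit a e y Ha ltac:(lra) Hey))).
  rewrite Rdiv_1_l in Hrest. rewrite <- Rplus_assoc. exact Hrest.
Qed.

Lemma sum_inv_sqr_le K (e x : nat -> R) :
  (forall i, (1 <= i <= K)%nat -> 0 < e i /\ sum1 i e <= x i /\ sum1 (i - 1) e + 1 <= x i) ->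
  sum1 K (fun i => e i / x i ^ 2) <= PI ^ 2 / 6.
Proof.
  intros H. apply (under_chords_bound (sum1 K e)).
  induction K as [|K IH]; [exact under_chords_0|].
  destruct (H (S K) ltac:(lia)) as (He & Hx & Hx1).
  rewrite Nat.sub_1_r in Hx1. simpl in Hx, Hx1 |- *.
  apply under_chords_step; [apply IH; intros; apply H; lia | | exact He | exact Hx1 | exact Hx].
  apply sum1_nonneg. intros i Hi. apply Rlt_le, H. lia.
Qed.

Lemma scaled_sum_inv_sqr_le d K (e x : nat -> R) : 0 < d ->
  (forall i, (1 <= i <= K)%nat -> 0 < e i /\ sum1 i e <= x i /\ sum1 (i - 1) e + d <= x i) ->
  d * sum1 K (fun i => e i / x i ^ 2) <= PI ^ 2 / 6.
Proof.
  intros Hd H.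
  assert (Hscal : forall n, sum1 n (fun i => e i / d) = sum1 n e / d).
  { intros n. unfold Rdiv. rewrite Rmult_comm, <- sum1_scal. apply sum1_ext. intros; ring. }
  assert (Hx : forall i, (1 <= i <= K)%nat -> 0 < x i).
  { intros i Hi. destruct (H i Hi) as (Hei & _ & Hxi).
    assert (0 <= sum1 (i - 1) e) by (apply sum1_nonneg; intros; apply Rlt_le, H; lia). lra. }
  replace (d * sum1 K (fun i => e i / x i ^ 2)) with (sum1 K (fun i => e i / d / (x i / d) ^ 2)).
  - apply sum_inv_sqr_le. intros i Hi. destruct (H i Hi) as (Hei & Hxi & Hxi1). rewrite !Hscal.
    split; [apply Rdiv_lt_0_compat; lra|]. assert (0 < / d) by (apply Rinv_0_lt_compat; lra).
    unfold Rdiv. split; [apply Rmult_le_compat_r; lra|].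
    replace 1 with (d * / d) by (field; lra). rewrite <- Rmult_plus_distr_r.
    apply Rmult_le_compat_r; lra.
  - rewrite <- sum1_scal. apply sum1_ext. intros i Hi. assert (Hxi := Hx i Hi). field. lra.
Qed.

Lemma sum1_split_at N m f : (1 <= m <= N)%nat ->
  sum1 N f = sum1 (m - 1) (fun i => f (m - i)%nat) + f m + sum1 (N - m) (fun i => f (m + i)%nat).
Proof.
  intros Hm. replace N with ((m - 1) + S (N - m))%nat at 1 by lia.
  rewrite sum1_add_range, sum1_Sl, (sum1_rev (m - 1)).
  replace (m - 1 + 1)%nat with m by lia. rewrite <- Rplus_assoc.
  f_equal; [f_equal|]; apply sum1_ext; intros; f_equal; lia.
Qed.

Lemma delta_pos lam k : strictly_increasing_Z lam -> 0 < delta lam k.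
Proof.
  intros Hinc. unfold delta.
  assert (lam (k - 1)%Z < lam k) by (apply Hinc; lia).
  assert (lam k < lam (k + 1)%Z) by (apply Hinc; lia).
  apply Rmin_glb_lt; lra.
Qed.

Lemma delta_sum_le_gap lam m n :
  sum1 n (fun i => delta lam (m + Z.of_nat i)) <= lam (m + Z.of_nat n)%Z - lam m.
Proof.
  induction n as [|n IH]; cbn [sum1].
  - rewrite Z.add_0_r. lra.
  - set (k := (m + Z.of_nat (S n))%Z).
    assert (Hd : delta lam k <= lam k - lam (k - 1)%Z) by apply Rmin_l.
    replace (k - 1)%Z with (m + Z.of_nat n)%Z in Hd by (unfold k; lia). lra.
Qed.

Lemma delta_sum_le_gap_succ lam m n :
  delta lam m + sum1 n (fun i => delta lam (m + Z.of_nat i)) <= lam (m + Z.of_nat n + 1)%Z - lam m.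
Proof.
  induction n as [|n IH]; cbn [sum1].
  - rewrite Z.add_0_r. assert (delta lam m <= lam (m + 1)%Z - lam m) by apply Rmin_r. lra.
  - set (k := (m + Z.of_nat (S n))%Z).
    assert (Hd : delta lam k <= lam (k + 1)%Z - lam k) by apply Rmin_r.
    replace (m + Z.of_nat n + 1)%Z with k in IH by (unfold k; lia). lra.
Qed.

Lemma delta_right_sum_le lam m K : strictly_increasing_Z lam ->
  delta lam m * sum1 K (fun i => delta lam (m + Z.of_nat i) / (lam (m + Z.of_nat i)%Z - lam m) ^ 2)
  <= PI ^ 2 / 6.
Proof.
  intros Hinc. apply scaled_sum_inv_sqr_le; [apply delta_pos, Hinc|].
  intros i Hi. split; [apply delta_pos, Hinc | split; [apply delta_sum_le_gap|]].
  assert (H := delta_sum_le_gap_succ lam m (i - 1)).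
  replace (m + Z.of_nat (i - 1) + 1)%Z with (m + Z.of_nat i)%Z in H by lia. lra.
Qed.

Lemma delta_reflect lam c k : delta (fun j => - lam (c - j)%Z) k = delta lam (c - k)%Z.
Proof.
  unfold delta. rewrite Rmin_comm.
  replace (c - (k - 1))%Z with (c - k + 1)%Z by lia.
  replace (c - (k + 1))%Z with (c - k - 1)%Z by lia.
  f_equal; ring.
Qed.

Lemma delta_left_sum_le lam m K : strictly_increasing_Z lam ->
  delta lam m * sum1 K (fun i => delta lam (m - Z.of_nat i) / (lam m - lam (m - Z.of_nat i)%Z) ^ 2)
  <= PI ^ 2 / 6.
Proof.
  intros Hinc. set (lam' j := - lam (2 * m - j)%Z).
  assert (Hinc' : strictly_increasing_Z lam').
  { intros j k Hjk. unfold lam'. assert (lam (2 * m - k)%Z < lam (2 * m - j)%Z) by (apply Hinc; lia). lra. }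
  eapply Rle_trans; [|exact (delta_right_sum_le lam' m K Hinc')].
  unfold lam'. rewrite delta_reflect. replace (2 * m - m)%Z with m by lia.
  right. f_equal. apply sum1_ext. intros i Hi.
  rewrite delta_reflect. replace (2 * m - (m + Z.of_nat i))%Z with (m - Z.of_nat i)%Z by lia.
  f_equal. ring.
Qed.

Lemma quadratic_form_le_row_sum N (k : nat -> nat -> R) (t : nat -> R) C :
  (forall m n, k m n = k n m) -> (forall m n, 0 <= k m n) ->
  (forall m, (1 <= m <= N)%nat -> sum1 N (k m) <= C) ->
  sum1 N (fun m => sum1 N (fun n => k m n * t m * t n)) <= C * sum1 N (fun n => t n ^ 2).
Proof.
  intros Hsym Hpos Hrow.
  assert (Hamgm : sum1 N (fun m => sum1 N (fun n => k m n * t m * t n))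
    <= sum1 N (fun m => sum1 N (fun n => k m n * t m ^ 2 / 2))
       + sum1 N (fun m => sum1 N (fun n => k n m * t n ^ 2 / 2))).
  { rewrite <- sum1_add. apply sum1_le; intros m _.
    rewrite <- sum1_add. apply sum1_le; intros n _. rewrite (Hsym n m).
    assert (0 <= k m n * (t m - t n) ^ 2) by (apply Rmult_le_pos; [apply Hpos | apply pow2_ge_0]).
    assert (k m n * t m ^ 2 / 2 + k m n * t n ^ 2 / 2 - k m n * t m * t n
            = k m n * (t m - t n) ^ 2 / 2) by field.
    lra. }
  rewrite (sum1_exchange N N (fun m n => k n m * t n ^ 2 / 2)) in Hamgm.
  assert (Hrows : sum1 N (fun m => sum1 N (fun n => k m n * t m ^ 2 / 2))
                  <= C / 2 * sum1 N (fun n => t n ^ 2)).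
  { rewrite <- sum1_scal. apply sum1_le. intros m Hm.
    replace (sum1 N (fun n => k m n * t m ^ 2 / 2)) with (t m ^ 2 / 2 * sum1 N (k m))
      by (rewrite <- sum1_scal; apply sum1_ext; intros; field).
    assert (Hr := Hrow m Hm). assert (0 <= t m ^ 2) by apply pow2_ge_0. nra. }
  lra.
Qed.

Definition kernel (lam : Z -> R) (m n : nat) : R :=
  if Nat.eqb n m then 0
  else delta lam (Z.of_nat m) * delta lam (Z.of_nat n) / (lam (Z.of_nat m) - lam (Z.of_nat n)) ^ 2.

Lemma kernel_sym lam m n : kernel lam m n = kernel lam n m.
Proof.
  unfold kernel. rewrite Nat.eqb_sym. destruct (Nat.eqb m n); [reflexivity|].
  unfold Rdiv. f_equal; [ring|]. f_equal. ring.
Qed.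

Lemma kernel_nonneg lam m n : strictly_increasing_Z lam -> 0 <= kernel lam m n.
Proof.
  intros Hinc. unfold kernel. destruct (Nat.eqb_spec n m) as [_ | Hnm]; [lra|].
  assert (Hgap : lam (Z.of_nat m) - lam (Z.of_nat n) <> 0).
  { destruct (proj1 (Nat.lt_gt_cases n m) Hnm) as [Hlt | Hlt];
      [ assert (lam (Z.of_nat n) < lam (Z.of_nat m)) by (apply Hinc; lia)
      | assert (lam (Z.of_nat m) < lam (Z.of_nat n)) by (apply Hinc; lia) ]; lra. }
  apply Rlt_le, Rdiv_lt_0_compat.
  - apply Rmult_lt_0_compat; apply delta_pos, Hinc.
  - rewrite <- Rsqr_pow2. apply Rsqr_pos_lt, Hgap.
Qed.

Lemma kernel_add lam m i : (0 < i)%nat ->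
  kernel lam m (m + i) = delta lam (Z.of_nat m)
    * (delta lam (Z.of_nat m + Z.of_nat i) / (lam (Z.of_nat m + Z.of_nat i)%Z - lam (Z.of_nat m)) ^ 2).
Proof.
  intros Hi. unfold kernel. destruct (Nat.eqb_spec (m + i) m) as [Heq | _]; [lia|].
  rewrite Nat2Z.inj_add. unfold Rdiv. rewrite <- Rmult_assoc. f_equal. f_equal. ring.
Qed.

Lemma kernel_sub lam m i : (0 < i <= m)%nat ->
  kernel lam m (m - i) = delta lam (Z.of_nat m)
    * (delta lam (Z.of_nat m - Z.of_nat i) / (lam (Z.of_nat m) - lam (Z.of_nat m - Z.of_nat i)%Z) ^ 2).
Proof.
  intros Hi. unfold kernel. destruct (Nat.eqb_spec (m - i) m) as [Heq | _]; [lia|].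
  rewrite Nat2Z.inj_sub by lia. unfold Rdiv. apply Rmult_assoc.
Qed.

Lemma kernel_row_sum_le lam N m : strictly_increasing_Z lam -> (1 <= m <= N)%nat ->
  sum1 N (kernel lam m) <= PI ^ 2 / 3.
Proof.
  intros Hinc Hm. rewrite (sum1_split_at N m) by exact Hm.
  rewrite (sum1_ext (m - 1) _ _ (fun i Hi => kernel_sub lam m i ltac:(lia))),
    (sum1_ext (N - m) _ _ (fun i Hi => kernel_add lam m i ltac:(lia))), !sum1_scal.
  assert (Hdiag : kernel lam m m = 0) by (unfold kernel; rewrite Nat.eqb_refl; reflexivity).
  assert (Hl := delta_left_sum_le lam (Z.of_nat m) (m - 1) Hinc).
  assert (Hr := delta_right_sum_le lam (Z.of_nat m) (N - m) Hinc).
  lra.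
Qed.

Theorem proposition4 (lam : Z -> R) (Hinc : strictly_increasing_Z lam)
  (N : nat) (HN : (1 <= N)%nat) (t : nat -> R)
  (Ht : forall n : nat, (1 <= n <= N)%nat -> 0 <= t n) :
  sum1 N (fun m =>
    sum1 N (fun n =>
      if Nat.eqb n m then 0
      else delta lam (Z.of_nat m) * delta lam (Z.of_nat n) * t m * t n
           / (lam (Z.of_nat m) - lam (Z.of_nat n)) ^ 2))
  <= PI ^ 2 / 3 * sum1 N (fun n => t n ^ 2).
Proof.
  rewrite (sum1_ext N _ (fun m => sum1 N (fun n => kernel lam m n * t m * t n))).
  - apply quadratic_form_le_row_sum.
    + apply kernel_sym.
    + intros m n. apply kernel_nonneg, Hinc.
    + intros m Hm. apply kernel_row_sum_le; assumption.
  - intros m _. apply sum1_ext. intros n _. unfold kernel.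
    destruct (Nat.eqb n m); [ring | unfold Rdiv; ring].
Qed.
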